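(* Let $\mathcal P$ be a finite-dimensional complex solvable Poisson $n$-Lie algebra, and suppose that for some $x,m_1,\dots,m_{n-2}\in\mathcal P$ the restriction of the operator $Q_{(x,m_1,\dots,m_{n-2})}:z\mapsto[x,m_1,\dots,m_{n-2},z]$ to $\mathcal P^2$ is an invertible map $\mathcal P^2\to\mathcal P^2$. Then $\mathcal P\cdot\mathcal P=0$.
   Context: A Poisson $n$-Lie algebra is a commutative associative algebra $(\mathcal P,\cdot)$ with an $n$-linear skew-symmetric bracket satisfying the fundamental identity $[x_1,\dots,x_{n-1},[y_1,\dots,y_n]]=\sum_{i=1}^n[y_1,\dots,[x_1,\dots,x_{n-1},y_i],\dots,y_n]$ and the Leibniz rule $[y\cdot z,x_2,\dots,x_n]=y\cdot[z,x_2,\dots,x_n]+z\cdot[y,x_2,\dots,x_n]$. Products/brackets of subspaces are linear spans; $\mathcal P^2=[\mathcal P,\dots,\mathcal P]+\mathcal P\cdot\mathcal P$. $\mathcal P$ is solvable if $\mathcal P^{(s)}=0$ for some $s$, with $\mathcal P^{(1)}=\mathcal P$, $\mathcal P^{(k+1)}=[\mathcal P^{(k)},\mathcal P^{(k)},\mathcal P,\dots,\mathcal P]+\mathcal P^{(k)}\cdot\mathcal P^{(k)}$. *)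

From HB Require Import structures.
From mathcomp Require Import all_boot all_order all_algebra all_fingroup.
From mathcomp Require Import reals complex.
Set Implicit Arguments. Unset Strict Implicit. Unset Printing Implicit Defensive.
Import GRing.Theory.
Local Open Scope ring_scope.

(* Complex numbers: C = R[i] for R a realType (R is the real line up to
   isomorphism, so R[i] is the field of complex numbers).
   A finite-dimensional complex vector space is a  V : vectType R[i]. *)

Section PoissonNLie.
Variables (F : fieldType) (V : vectType F) (n : nat).

Definition upd (f : {ffun 'I_n -> V}) (i : nat) (u : V) : {ffun 'I_n -> V} :=
  [ffun j : 'I_n => if nat_of_ord j == i then u else f j].

Definition is_poisson_nlie (mul : V -> V -> V) (br : {ffun 'I_n -> V} -> V) : Prop :=
      (forall (a : F) (x y z : V), mul (a *: x + y) z = a *: mul x z + mul y z) /\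
      (forall x y : V, mul x y = mul y x) /\
      (forall x y z : V, mul x (mul y z) = mul (mul x y) z) /\
      (forall (f : {ffun 'I_n -> V}) (i : 'I_n) (a : F) (u v : V),
          br (upd f i (a *: u + v)) = a *: br (upd f i u) + br (upd f i v)) /\
      (forall (f : {ffun 'I_n -> V}) (s : 'S_n),
          br [ffun j => f (s j)] = (-1) ^+ (odd_perm s) *: br f) /\
      (* fundamental identity:
         [x_1,...,x_{n-1},[y_1,...,y_n]]
           = sum_i [y_1,...,[x_1,...,x_{n-1},y_i],...,y_n];
         the x_k are the first n-1 entries of x (its last entry is ignored) *)
      (forall x y : {ffun 'I_n -> V},
          br (upd x n.-1 (br y)) =
          \sum_(i < n) br (upd y i (br (upd x n.-1 (y i))))) /\
      (forall (x : {ffun 'I_n -> V}) (y z : V),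
          br (upd x 0 (mul y z)) = mul y (br (upd x 0 z)) + mul z (br (upd x 0 y))).

Definition in_span (S : V -> Prop) (v : V) : Prop :=
  exists s : seq V, (forall w, w \in s -> S w) /\ v \in <<s>>%VS.

Definition square (mul : V -> V -> V) (br : {ffun 'I_n -> V} -> V) : V -> Prop :=
  in_span (fun w => (exists f, w = br f) \/ (exists a b, w = mul a b)).

Definition derived_step (mul : V -> V -> V) (br : {ffun 'I_n -> V} -> V)
    (D : V -> Prop) : V -> Prop :=
  in_span (fun w =>
    (exists f : {ffun 'I_n -> V},
        (forall i : 'I_n, (nat_of_ord i < 2)%N -> D (f i)) /\ w = br f)
    \/ (exists a b, D a /\ D b /\ w = mul a b)).

(* derived_series k = P^(k+1); derived_series 0 = P *)
Fixpoint derived_series (mul : V -> V -> V) (br : {ffun 'I_n -> V} -> V)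
    (k : nat) : V -> Prop :=
  match k with
  | 0 => fun _ => True
  | k'.+1 => derived_step mul br (derived_series mul br k')
  end.

Definition solvable_pnl (mul : V -> V -> V) (br : {ffun 'I_n -> V} -> V) : Prop :=
  exists s : nat, forall v, derived_series mul br s v -> v = 0.

End PoissonNLie.

From HB Require Import structures.
From mathcomp Require Import all_boot all_order all_algebra all_fingroup.
From mathcomp Require Import reals complex.
Set Implicit Arguments. Unset Strict Implicit. Unset Printing Implicit Defensive.
Import GRing.Theory.
Local Open Scope ring_scope.

(* Write Q_y w = [y, m_1, ..., m_(n-2), w] and Q = Q_x.  Skew-symmetry makes
   Q a derivation of the product with Q x = 0, and the Leibniz rule in the
   first slot gives Q_(y x) w = y Q(w) + x Q_y(w).  Since Q is injective on
   P^2, which contains every product and bracket, and 2 is invertible, one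
   gets successively x x = 0, x Q(w) = 0, hence x P^2 = 0 (Q is onto P^2),
   y x = 0, y Q(w) = 0, and finally a b = 0 because Q(a b) = a Q(b) + b Q(a)
   vanishes. *)

Section PoissonNLieIdentities.
Variables (F : fieldType) (V : vectType F) (n : nat).
Variables (mul : V -> V -> V) (br : {ffun 'I_n.+1 -> V} -> V).
Hypothesis hP : is_poisson_nlie mul br.

Let pmul_linearl : forall c a b z, mul (c *: a + b) z = c *: mul a z + mul b z :=
  hP.1.
Let pmulC : forall a b, mul a b = mul b a := hP.2.1.
Let br_linear : forall f (i : 'I_n.+1) c u v,
    br (upd f i (c *: u + v)) = c *: br (upd f i u) + br (upd f i v) :=
  hP.2.2.2.1.
Let br_perm : forall (f : {ffun 'I_n.+1 -> V}) (s : 'S_n.+1),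
    br [ffun j => f (s j)] = (-1) ^+ odd_perm s *: br f :=
  hP.2.2.2.2.1.
Let br_leibniz0 : forall (f : {ffun 'I_n.+1 -> V}) y z,
    br (upd f 0 (mul y z)) = mul y (br (upd f 0 z)) + mul z (br (upd f 0 y)) :=
  hP.2.2.2.2.2.2.

Lemma square0 : square mul br 0.
Proof. by exists [::]; split => //; apply: mem0v. Qed.

Lemma square_mul a b : square mul br (mul a b).
Proof.
exists [:: mul a b]; split; last by apply: memv_span; rewrite mem_head.
by move=> w; rewrite inE => /eqP ->; right; exists a, b.
Qed.

Lemma square_br f : square mul br (br f).
Proof.
exists [:: br f]; split; last by apply: memv_span; rewrite mem_head.
by move=> w; rewrite inE => /eqP ->; left; exists f.
Qed.

Lemma pmul0l z : mul 0 z = 0.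
Proof.
have := pmul_linearl 1 0 0 z; rewrite !scale1r addr0 => /(congr1 (fun u => u - mul 0 z)).
by rewrite subrr addrK.
Qed.

Lemma pmulZr c y v : mul y (c *: v) = c *: mul y v.
Proof.
by rewrite pmulC -[c *: v]addr0 pmul_linearl pmul0l addr0 pmulC.
Qed.

Lemma pmulNr y v : mul y (- v) = - mul y v.
Proof. by rewrite -scaleN1r pmulZr scaleN1r. Qed.

Lemma pmul0r y : mul y 0 = 0.
Proof. by rewrite pmulC pmul0l. Qed.

Lemma br_upd0 f (i : 'I_n.+1) : br (upd f i 0) = 0.
Proof.
have := br_linear f i 1 0 0; rewrite !scale1r addr0.
by move=> /(congr1 (fun u => u - br (upd f i 0))); rewrite subrr addrK.
Qed.

Lemma upd_id (f : {ffun 'I_n.+1 -> V}) (i : 'I_n.+1) : upd f i (f i) = f.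
Proof. by apply/ffunP => j; rewrite ffunE; case: eqP => [/val_inj ->|]. Qed.

Lemma br_tperm (f : {ffun 'I_n.+1 -> V}) (i j : 'I_n.+1) :
  i != j -> br [ffun k => f (tperm i j k)] = - br f.
Proof. by move=> ij; rewrite br_perm odd_tperm ij expr1 scaleN1r. Qed.

Lemma br_leibniz f (i : 'I_n.+1) y z :
  br (upd f i (mul y z)) = mul y (br (upd f i z)) + mul z (br (upd f i y)).
Proof.
have [-> | i0] := eqVneq i ord0; first exact: br_leibniz0.
have i0n : (i : nat) != 0%N by move: i0; rewrite -val_eqE.
pose g := [ffun k => f (tperm ord0 i k)].
have swap u : br (upd f i u) = - br (upd g 0 u).
  rewrite -(@br_tperm _ ord0 i) 1?eq_sym //; congr br; apply/ffunP => k.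
  rewrite !ffunE; case: tpermP => [-> | -> | /eqP k0 /eqP ki]; rewrite ?eqxx //.
    by rewrite eq_sym (negbTE i0n) tpermR.
  have k0n : (k : nat) != 0%N by move: k0; rewrite -val_eqE.
  have kin : (k : nat) != i by move: ki; rewrite -val_eqE.
  by rewrite (negbTE k0n) (negbTE kin) tpermD // eq_sym.
by rewrite !swap br_leibniz0 opprD -!pmulNr.
Qed.

Hypothesis two_neq0 : (2%:R : F) != 0.

Lemma double_eq0 (v : V) : v + v = 0 -> v = 0.
Proof.
by rewrite -mulr2n -scaler_nat => /eqP; rewrite scaler_eq0 (negbTE two_neq0) => /eqP.
Qed.

Lemma br_dup (f : {ffun 'I_n.+1 -> V}) (i j : 'I_n.+1) :
  i != j -> f i = f j -> br f = 0.
Proof.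
move=> ij fij; apply: double_eq0; apply/eqP; rewrite addr_eq0; apply/eqP.
rewrite -(@br_tperm f i j ij); congr br; apply/ffunP => k; rewrite ffunE.
by case: tpermP => // ->.
Qed.

End PoissonNLieIdentities.

Section InvertibleInnerDerivation.
Variables (F : fieldType) (V : vectType F) (n : nat).
Variables (mul : V -> V -> V) (br : {ffun 'I_n.+2 -> V} -> V).
Hypothesis hP : is_poisson_nlie mul br.
Hypothesis two_neq0 : (2%:R : F) != 0.
Variable xm : {ffun 'I_n.+2 -> V}.

Let P2 := square mul br.
Let Q z := br (upd xm n.+1 z).
Let Qat y w := br (upd (upd xm n.+1 w) 0 y).
Let x := xm ord0.

Hypothesis Q_inj : forall z1 z2, P2 z1 -> P2 z2 -> Q z1 = Q z2 -> z1 = z2.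
Hypothesis Q_onto : forall w, P2 w -> exists z, P2 z /\ Q z = w.

Lemma Q_eq0 z : P2 z -> Q z = 0 -> z = 0.
Proof.
move=> P2z Qz0; apply: Q_inj => //; first exact: square0.
by rewrite Qz0 /Q (br_upd0 hP xm ord_max).
Qed.

Lemma Q_leibniz y z : Q (mul y z) = mul y (Q z) + mul z (Q y).
Proof. exact: (br_leibniz hP _ ord_max). Qed.

Lemma Q_x : Q x = 0.
Proof.
apply: (br_dup hP two_neq0 (i := ord0) (j := ord_max)) => //.
by rewrite !ffunE /= eqxx.
Qed.

Lemma Qat_x w : Qat x w = Q w.
Proof.
have -> : x = upd xm n.+1 w ord0 by rewrite ffunE.
by rewrite /Qat (upd_id (upd xm n.+1 w) ord0).
Qed.

Lemma Qat_mul_x y w : Qat (mul y x) w = mul y (Q w) + mul x (Qat y w).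
Proof. by rewrite /Qat (br_leibniz hP _ ord0) -/(Qat x w) Qat_x. Qed.

Lemma mul_xx : mul x x = 0.
Proof.
apply: Q_eq0; first exact: square_mul.
by rewrite Q_leibniz Q_x (pmul0r hP) addr0.
Qed.

Lemma mul_x_Q w : mul x (Q w) = 0.
Proof.
apply: double_eq0 => //; have := Qat_mul_x x w.
by rewrite Qat_x mul_xx /Qat (br_upd0 hP _ ord0) => /esym.
Qed.

Lemma mul_x_square a : P2 a -> mul x a = 0.
Proof. by move=> /Q_onto [z [_ <-]]; apply: mul_x_Q. Qed.

Lemma mul_y_x y : mul y x = 0.
Proof.
apply: Q_eq0; first exact: square_mul.
by rewrite Q_leibniz Q_x (pmul0r hP) add0r mul_x_Q.
Qed.

Lemma mul_y_Q y w : mul y (Q w) = 0.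
Proof.
have := Qat_mul_x y w; rewrite mul_y_x mul_x_square ?addr0; last exact: square_br.
by rewrite /Qat (br_upd0 hP _ ord0).
Qed.

Lemma mul_eq0 a b : mul a b = 0.
Proof.
apply: Q_eq0; first exact: square_mul.
by rewrite Q_leibniz !mul_y_Q addr0.
Qed.

End InvertibleInnerDerivation.

Theorem proposition5p17 (R : realType) (V : vectType R[i]) (n : nat)
    (hn : (2 <= n)%N)
    (mul : V -> V -> V) (br : {ffun 'I_n -> V} -> V)
    (hP : is_poisson_nlie mul br)
    (hsolv : solvable_pnl mul br)
    (xm : {ffun 'I_n -> V})
    (hQmaps : forall z, square mul br z -> square mul br (br (upd xm n.-1 z)))
    (hQinj : forall z1 z2, square mul br z1 -> square mul br z2 ->
        br (upd xm n.-1 z1) = br (upd xm n.-1 z2) -> z1 = z2)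
    (hQsurj : forall w, square mul br w ->
        exists z, square mul br z /\ br (upd xm n.-1 z) = w) :
  forall a b : V, mul a b = 0.
Proof.
clear hsolv hQmaps.
case: n hn => [|[|k]] // _ in br hP xm hQinj hQsurj *.
have two_neq0 : (2%:R : R[i]) != 0 by rewrite Num.Theory.pnatr_eq0.
exact: (mul_eq0 hP two_neq0 hQinj hQsurj).
Qed.
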